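(* Let $\mathcal O$ be a set of operations with $\emptyset \neq \mathcal O \subseteq \{\cup,\cap,\overline{\phantom{c}},+,/\}$ and let $C$ be an $\mathcal O$-circuit. Then there exists a natural number $n \le 2^{|C|}+1$ such that for every natural number $z \ge n$ we have $z \in I(C)$ if and only if $n \in I(C)$.
   Context: Natural numbers include $0$. For $A,B\subseteq\mathbb N$: $A\cup B$, $A\cap B$ are the usual operations, $\overline{A}=\mathbb N\setminus A$, $A+B=\{a+b: a\in A, b\in B\}$, $A\times B=\{a\cdot b: a\in A, b\in B\}$, and $A/B=\{c\in\mathbb N:\exists a\in A\ \exists b\in B\setminus\{0\}: a=c\cdot b\}$ (exact integer division without remainder or rounding). For $\emptyset\ne\mathcal O\subseteq\{\cup,\cap,\overline{\phantom{c}},+,\times,/\}$, an $\mathcal O$-circuit $C=(V,E,g_C,\alpha)$ is a finite acyclic directed multigraph with gate set $V\subseteq\mathbb N$, every gate having indegree $0$, $1$ or $2$, a designated output gate $g_C\in V$, and a labeling $\alpha$: gates of indegree $0$ (input gates) are labeled by natural numbers, gates of indegree $1$ are labeled $\overline{\phantom{c}}$ (allowed only if $\overline{\phantom{c}}\in\mathcal O$), and gates of indegree $2$ are labeled by an operation in $\mathcal O\setminus\{\overline{\phantom{c}}\}$. The result set $I(g)\subseteq\mathbb N$ is defined inductively: $I(g)=\{\alpha(g)\}$ for an input gate; $I(g)=\mathbb N\setminus I(p)$ for a complement gate with predecessor $p$; $I(g)=I(g_1)\,\sigma\,I(g_2)$ for a gate labeled $\sigma$ with predecessors $g_1\le g_2$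 (a double edge from one gate gives $g_1=g_2$). $I(C)=I(g_C)$. A circuit is encoded as a bit string listing its gates in reverse topological order, each gate as the triple (gate name, label, list of predecessors), with all numbers (including input labels) in binary; $|C|$ denotes the length of this encoding. *)

From mathcomp Require Import all_boot.
Set Implicit Arguments. Unset Strict Implicit. Unset Printing Implicit Defensive.

Definition natset := nat -> Prop.

Definition nsetU (A B : natset) : natset := fun x => A x \/ B x.
Definition nsetI (A B : natset) : natset := fun x => A x /\ B x.
Definition nsetC (A : natset) : natset := fun x => ~ A x.
Definition nsetPlus (A B : natset) : natset :=
  fun x => exists a b, A a /\ B b /\ x = a + b.
Definition nsetTimes (A B : natset) : natset :=
  fun x => exists a b, A a /\ B b /\ x = a * b.
Definition nsetDiv (A B : natset) : natset :=
  fun c => exists a b, A a /\ B b /\ b <> 0 /\ a = c * b.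

Inductive oper := OUnion | OInter | OCompl | OPlus | OTimes | ODiv.

Inductive label := LInput of nat | LCompl | LBin of oper.

Record gate := Gate { gname : nat; glabel : label; gpreds : seq nat }.

(** A circuit: its gates listed in reverse topological order (every gate
    appears before all of its predecessors), and the output gate. *)
Record circuit := Circuit { gates : seq gate; gout : nat }.

Definition apply_bin (o : oper) (A B : natset) : natset :=
  match o with
  | OUnion => nsetU A B
  | OInter => nsetI A B
  | OPlus => nsetPlus A B
  | OTimes => nsetTimes A B
  | ODiv => nsetDiv A B
  | OCompl => fun _ => False (* never used in a well-formed circuit *)
  end.

(** Value of a gate given the values of (earlier evaluated) gates.
    For binary gates the predecessors are g1 <= g2 (by gate name). *)
Definition gate_val (e : nat -> natset) (g : gate) : natset :=
  match glabel g with
  | LInput k => fun z => z = k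
  | LCompl => nsetC (e (head 0 (gpreds g)))
  | LBin o =>
      let p := nth 0 (gpreds g) 0 in
      let q := nth 0 (gpreds g) 1 in
      apply_bin o (e (minn p q)) (e (maxn p q))
  end.

Fixpoint gate_env (gs : seq gate) : nat -> natset :=
  match gs with
  | [::] => fun _ _ => False
  | g :: rest =>
      let e := gate_env rest in
      fun x => if x == gname g then gate_val e g else e x
  end.

Definition I (C : circuit) : natset := gate_env (gates C) (gout C).

Definition label_ok (O : oper -> Prop) (g : gate) : Prop :=
  match glabel g with
  | LInput _ => gpreds g = [::]
  | LCompl => O OCompl /\ size (gpreds g) = 1
  | LBin o => O o /\ o <> OCompl /\ size (gpreds g) = 2
  end.

(** Well-formed list: distinct names, labels admissible, and predecessors
    of each gate are gates listed later (acyclicity). *)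
Fixpoint wf_gates (O : oper -> Prop) (gs : seq gate) : Prop :=
  match gs with
  | [::] => True
  | g :: rest =>
      gname g \notin map gname rest /\
      label_ok O g /\
      (forall p, p \in gpreds g -> p \in map gname rest) /\
      wf_gates O rest
  end.

Definition is_O_circuit (O : oper -> Prop) (C : circuit) : Prop :=
  wf_gates O (gates C) /\ gout C \in map gname (gates C).

(** Encoding length |C|: numbers in binary (bit length, 0 has length 1),
    an operation label takes 3 bits. *)
Definition blen (n : nat) : nat := (trunc_log 2 n).+1.

Definition label_len (l : label) : nat :=
  match l with
  | LInput k => blen k
  | _ => 3
  end.

Definition gate_len (g : gate) : nat :=
  blen (gname g) + label_len (glabel g) + \sum_(p <- gpreds g) blen p.

Definition csize (C : circuit) : nat := \sum_(g <- gates C) gate_len g.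

From mathcomp Require Import all_boot.
From mathcomp Require Import zify.
From Stdlib Require Import Classical.

Set Implicit Arguments.
Unset Strict Implicit.
Unset Printing Implicit Defensive.

(* Every gate of a circuit without multiplication computes a set that is
   constant (all in or all out) from some threshold on.  The threshold grows
   along the circuit: an input k is constant from k + 1 <= 2^(blen k), union,
   intersection and complement keep the threshold, a quotient A/B inherits the
   threshold of A (c >= n implies c*b >= n), and a sum A + B is constant from
   the sum of the thresholds, because a nonempty set that is eventually
   constant from n has an element <= n.  Each gate costs at least one bit, so
   doubling the threshold per gate stays below 2^|C|. *)

Definition const_from (A : natset) (n : nat) : Prop :=
  (forall z, n <= z -> A z) \/ (forall z, n <= z -> ~ A z).

Lemma const_from_le A n m : const_from A n -> n <= m -> const_from A m.
Proof. by move=> [H|H] le_nm; [left|right] => z le_mz; apply: H; lia. Qed.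

Lemma const_fromC A n : const_from A n -> const_from (nsetC A) n.
Proof.
rewrite /nsetC => -[H|H]; [right|left] => z le_nz.
- by apply; apply: H.
- exact: H.
Qed.

Lemma const_fromU A B n :
  const_from A n -> const_from B n -> const_from (nsetU A B) n.
Proof.
rewrite /nsetU => -[HA|HA] [HB|HB]; try by left => z /HA; left.
- by left => z /HB; right.
- by right => z le_nz [/(HA z le_nz)|/(HB z le_nz)].
Qed.

Lemma const_fromI A B n :
  const_from A n -> const_from B n -> const_from (nsetI A B) n.
Proof.
rewrite /nsetI => -[HA|HA] [HB|HB]; try by right => z le_nz [/(HA z le_nz)].
- by left => z le_nz; split; [apply: HA | apply: HB].
- by right => z le_nz [_ /(HB z le_nz)].
Qed.

Lemma const_from_small_elt A n a :
  const_from A n -> A a -> exists2 a', A a' & a' <= n.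
Proof.
move=> [H|H] Aa; first by exists n => //; apply: H.
exists a => //; case: (leqP a n) => // lt_na.
by case: (H a (ltnW lt_na) Aa).
Qed.

Lemma nsetPlusC A B z : nsetPlus A B z -> nsetPlus B A z.
Proof. by move=> [a [b [Aa [Bb ->]]]]; exists b, a; rewrite addnC. Qed.

Lemma nsetPlus_full A B nA nB b :
  (forall z, nA <= z -> A z) -> const_from B nB -> B b ->
  forall z, nA + nB <= z -> nsetPlus A B z.
Proof.
move=> HA HB Bb z le_z.
have [b' Bb' le_b'] := const_from_small_elt HB Bb.
by exists (z - b'), b'; split; [apply: HA; lia | split => //; lia].
Qed.

Lemma const_fromPlus A B nA nB :
  const_from A nA -> const_from B nB -> const_from (nsetPlus A B) (nA + nB).
Proof.
move=> HA HB.
have [[a Aa]|noA] := classic (exists a, A a); last first.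
  by right => z _ [a [b [Aa _]]]; apply: noA; exists a.
have [[b Bb]|noB] := classic (exists b, B b); last first.
  by right => z _ [a' [b [_ [Bb _]]]]; apply: noB; exists b.
case: (HA) => [HA'|HA']; first by left; apply: (nsetPlus_full HA' HB Bb).
case: (HB) => [HB'|HB'].
  left => z le_z; apply: nsetPlusC; apply: (nsetPlus_full HB' HA Aa); lia.
right => z le_z [a' [b' [Aa' [Bb' def_z]]]].
have lt_a' : a' < nA by case: (leqP nA a') => // /HA'.
have lt_b' : b' < nB by case: (leqP nB b') => // /HB'.
lia.
Qed.

Lemma const_fromDiv A B n : const_from A n -> const_from (nsetDiv A B) n.
Proof.
move=> HA.
have [[b [Bb nz_b]]|noB] := classic (exists b, B b /\ b <> 0); last first.
  by right => c _ [a [b [_ [Bb [nz_b _]]]]]; apply: noB; exists b.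
have le_mul c b' : b' <> 0 -> c <= c * b' by move=> ?; apply: leq_pmulr; lia.
case: HA => HA.
- left => c le_nc; exists (c * b), b; split => //.
  by apply: HA; apply: leq_trans le_nc (le_mul c b nz_b).
- right => c le_nc [a [b' [Aa [Bb' [nz_b' def_a]]]]].
  by apply: (HA a) Aa; rewrite def_a; apply: leq_trans le_nc (le_mul c b' nz_b').
Qed.

Definition gates_len (gs : seq gate) : nat := \sum_(g <- gs) gate_len g.

Lemma gates_len_cons g gs : gates_len (g :: gs) = gate_len g + gates_len gs.
Proof. by rewrite /gates_len big_cons. Qed.

Lemma double_pow_gates_len g gs :
  2 ^ gates_len gs + 2 ^ gates_len gs <= 2 ^ gates_len (g :: gs).
Proof.
rewrite gates_len_cons addnn -mul2n -expnS leq_exp2l //.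
by rewrite /gate_len /blen; lia.
Qed.

Lemma input_lt_pow_gates_len g gs k :
  glabel g = LInput k -> k < 2 ^ gates_len (g :: gs).
Proof.
move=> lab_g; apply: leq_trans (trunc_log_ltn k (ltnSn 1)) _.
by rewrite leq_exp2l // gates_len_cons /gate_len lab_g /= /blen; lia.
Qed.

Lemma gate_env_const_from O gs : ~ O OTimes -> wf_gates O gs ->
  forall x, const_from (gate_env gs x) (2 ^ gates_len gs).
Proof.
move=> noTimes; elim: gs => [|g gs IH] /=.
  by move=> _ x; right => z _ [].
move=> [_ [ok_g [_ wf_gs]]] x.
have IHgs := IH wf_gs.
have le_rest y : const_from (gate_env gs y) (2 ^ gates_len (g :: gs)).
  by apply: const_from_le (IHgs y) _; have := double_pow_gates_len g gs; lia.
case: (x == gname g) => //; rewrite /gate_val.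
move: ok_g; rewrite /label_ok; case lab_g: (glabel g) => [k||o] ok_g.
- right=> z le_z def_z; have := input_lt_pow_gates_len gs lab_g; lia.
- exact: const_fromC (le_rest _).
- case: ok_g => Oo [not_compl _]; clear lab_g.
  case: o Oo not_compl => Oo not_compl /=.
  + exact: const_fromU (le_rest _) (le_rest _).
  + exact: const_fromI (le_rest _) (le_rest _).
  + by case: not_compl.
  + apply: const_from_le (const_fromPlus (IHgs _) (IHgs _)) _.
    exact: double_pow_gates_len.
  + by case: noTimes.
  + exact: const_fromDiv (le_rest _).
Qed.

Theorem lemma1 (O : oper -> Prop) (C : circuit) :
  (exists o, O o) -> ~ O OTimes -> is_O_circuit O C ->
  exists n, n <= 2 ^ csize C + 1 /\
    forall z, n <= z -> (I C z <-> I C n).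
Proof.
move=> _ noTimes [wf_C _]; exists (2 ^ csize C); split; first exact: leq_addr.
have [H|H] := gate_env_const_from noTimes wf_C (gout C) => z le_z; rewrite /I.
- by split=> _; apply: H.
- by split=> /H; case.
Qed.
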